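(* Consider the deterministic split-node max-neighbour algorithm described in the context, on a dynamic graph $(G_r)_{r\ge1}$ with node set $V$. For every round $r\ge1$, \[ \phi(V,w_r)\le\phi(V,w_{r-1})-t_{r-1}/60, \] where $t_r:=\max_{u,v\in V}|w_r(u)-w_r(v)|$.
   Context: Setting: a fixed set $V$ of $n$ nodes, a sequence of connected graphs $G_r=(V,E_r)$ ($r\ge1$), $N_r(v)$ the neighbours of $v$ in $G_r$, non-negative real loads $w_0(v)$, and $w_r(v)$ the load of $v$ at the end of round $r$. For $w:V\to\mathbb{R}_{\ge0}$, $\phi(V,w)=\sum_{\{u,v\}\subseteq V}|w(u)-w(v)|$ (sum over unordered pairs of distinct nodes). Algorithm: each node $v$ is split into two virtual nodes $v_s$ (sender) and $v_a$ (receiver). In round $r$: set $w_r^1(v_s)=w_r^1(v_a)=w_{r-1}(v)/2$. Each $v_s$ sends a proposal to $u_a$ where $u\in N_r(v)$ maximizes $|w_{r-1}(u)-w_{r-1}(v)|$ (ties broken by a fixed deterministic rule). Each $v_a$ that received proposals accepts exactly one, from $u_s$ with $u$ maximizing $|w_{r-1}(u)-w_{r-1}(v)|$ among proposers (deterministic tie-breaking). For each accepted pair $(u_s,v_a)$, set both virtual loads to $(w_r^1(u_s)+w_r^1(v_a))/2$; other virtual nodes keep their value; then $w_r(v)$ is the sum of the two virtual loads of $v$. *)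

From HB Require Import structures.
From mathcomp Require Import all_boot all_order all_algebra.
From mathcomp Require Import reals.
Set Implicit Arguments. Unset Strict Implicit. Unset Printing Implicit Defensive.
Import Order.TTheory GRing.Theory Num.Theory.
Local Open Scope ring_scope.

Section Defs.
Variables (R : realType) (V : finType).

Definition connected_graph (e : rel V) : Prop :=
  symmetric e /\ irreflexive e /\ (forall x y, connect e x y).

Definition phi (w : V -> R) : R :=
  \sum_(u : V) \sum_(v : V | (enum_rank u < enum_rank v)%N) `|w u - w v|.

Definition tdisc (w : V -> R) : R :=
  \big[Num.max/0]_(u : V) \big[Num.max/0]_(v : V) `|w u - w v|.

(* prop v = Some u : the sender v_s proposes to the receiver u_a.
   u must be a neighbour of v maximizing |w u - w v|; None iff v has no
   neighbour.  (Any tie-breaking is allowed.) *)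
Definition proposals_ok (e : rel V) (w : V -> R) (prop : V -> option V) : Prop :=
  forall v, match prop v with
            | Some u => e v u /\ (forall u', e v u' -> `|w u' - w v| <= `|w u - w v|)
            | None => forall u, ~~ e v u
            end.

(* acc v = Some u : the receiver v_a accepts the proposal of the sender u_s.
   u must be a proposer of v maximizing |w u - w v| among the proposers;
   None iff v_a received no proposal.  (Any tie-breaking is allowed.) *)
Definition acceptances_ok (w : V -> R) (prop acc : V -> option V) : Prop :=
  forall v, match acc v with
            | Some u => prop u = Some v /\
                        (forall u', prop u' = Some v -> `|w u' - w v| <= `|w u - w v|)
            | None => forall u, prop u <> Some v
            end.

(* Virtual load of v_s after the round (initially w v / 2). *)
Definition sender_load (w : V -> R) (prop acc : V -> option V) (v : V) : R :=
  match prop v with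
  | Some u => if acc u == Some v then (w v / 2 + w u / 2) / 2 else w v / 2
  | None => w v / 2
  end.

(* Virtual load of v_a after the round (initially w v / 2). *)
Definition receiver_load (w : V -> R) (acc : V -> option V) (v : V) : R :=
  match acc v with
  | Some u => (w u / 2 + w v / 2) / 2
  | None => w v / 2
  end.

Definition round_step (w : V -> R) (prop acc : V -> option V) : V -> R :=
  fun v => sender_load w prop acc v + receiver_load w acc v.

End Defs.

From HB Require Import structures.
From mathcomp Require Import all_boot all_order all_algebra.
From mathcomp Require Import reals.
From mathcomp Require Import ring lra.
Set Implicit Arguments. Unset Strict Implicit. Unset Printing Implicit Defensive.
Import Order.TTheory GRing.Theory Num.Theory.
Local Open Scope ring_scope.

(* Work on the 2n virtual nodes.  Their pairwise-distance sum starts at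
   4 phi(w_{r-1}), bounds 4 phi(w_r) from above (merging the two halves of a
   node is a triangle inequality), and averaging along the matching of the
   round lowers it by at least half the total gap of the matched pairs.  So
   phi drops by at least (sum of matched gaps)/16.  Every edge x-y is
   dominated by the gap accepted at the receiver h that x proposed to, which
   is also at least |w x - w h|; walking along a path and charging each hub h
   only once (3 times its gap) shows t_{r-1} <= 3 (sum of matched gaps).
   Hence phi even drops by t_{r-1}/48. *)

Section Dispersion.
Variable R : realType.

Definition sum_dist (I : finType) (a : I -> R) : R :=
  \sum_i \sum_j `|a i - a j|.

Definition pair_average (I : finType) (pi : I -> I) (a : I -> R) (i : I) : R :=
  (a i + a (pi i)) / 2.

Lemma ler_norm2DB (a b c d : R) :
  2 * `|a + b - (c + d)| <= `|a - c| + `|a - d| + `|b - c| + `|b - d|.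
Proof.
have acbd : `|a + b - (c + d)| <= `|a - c| + `|b - d|.
  by rewrite (_ : a + b - (c + d) = (a - c) + (b - d)) ?ler_normD //; ring.
have adbc : `|a + b - (c + d)| <= `|a - d| + `|b - c|.
  by rewrite (_ : a + b - (c + d) = (a - d) + (b - c)) ?ler_normD //; ring.
lra.
Qed.

Lemma distr_half (x y : R) : `|x / 2 - y / 2| = `|x - y| / 2.
Proof. by rewrite -mulrBl normrM (@ger0_norm _ 2^-1) // invr_ge0. Qed.

Lemma sum_pair_bool (V : finType) (F : bool * V -> R) :
  \sum_(i : bool * V) F i = \sum_v (F (true, v) + F (false, v)).
Proof.
have -> : \sum_(i : bool * V) F i = \sum_(i : bool * V) F (i.1, i.2).
  by apply: eq_bigr => -[].
by rewrite big_split -(pair_big xpredT xpredT (fun b v => F (b, v))) big_bool.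
Qed.

Lemma sum_dist_pair_bool (V : finType) (a : bool * V -> R) :
  sum_dist a =
    \sum_u \sum_v (`|a (true, u) - a (true, v)| + `|a (true, u) - a (false, v)|
                 + `|a (false, u) - a (true, v)| + `|a (false, u) - a (false, v)|).
Proof.
rewrite /sum_dist sum_pair_bool; apply: eq_bigr => u _.
by rewrite !sum_pair_bool -big_split; apply: eq_bigr => v _ /=; ring.
Qed.

Lemma phi_sum_dist (V : finType) (w : V -> R) : 2 * phi w = sum_dist w.
Proof.
pose g u v := if (enum_rank u < enum_rank v)%N then `|w u - w v| else 0.
have phiE : phi w = \sum_u \sum_v g u v.
  rewrite /phi; apply: eq_bigr => u _; rewrite big_mkcond.
  by apply: eq_bigr => v _; rewrite /g; case: ifP.
have sym : sum_dist w = \sum_u \sum_v (g u v + g v u).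
  rewrite /sum_dist; apply: eq_bigr => u _; apply: eq_bigr => v _; rewrite /g.
  case: (ltngtP (enum_rank u) (enum_rank v)) => [_|_|/val_inj/enum_rank_inj ->].
  - by rewrite addr0.
  - by rewrite add0r distrC.
  - by rewrite subrr normr0 addr0.
rewrite sym (eq_bigr _ (fun u _ => big_split _ _ _ _ _)) big_split /=.
by rewrite [X in _ + X]exchange_big -phiE; ring.
Qed.

Lemma sum_dist_halves (V : finType) (w : V -> R) :
  sum_dist (fun i : bool * V => w i.2 / 2) = 4 * phi w.
Proof.
rewrite sum_dist_pair_bool (_ : 4 * phi w = 2 * (2 * phi w)); last by ring.
rewrite phi_sum_dist mulr_sumr.
apply: eq_bigr => u _; rewrite mulr_sumr; apply: eq_bigr => v _ /=.
rewrite !distr_half; lra.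
Qed.

Lemma phi_merge_le (V : finType) (a : bool * V -> R) (m : V -> R) :
  (forall v, m v = a (true, v) + a (false, v)) -> 4 * phi m <= sum_dist a.
Proof.
move=> mE; rewrite (_ : 4 * phi m = 2 * (2 * phi m)); last by ring.
rewrite phi_sum_dist mulr_sumr sum_dist_pair_bool.
apply: ler_sum => u _; rewrite mulr_sumr; apply: ler_sum => v _.
rewrite !mE; exact: ler_norm2DB.
Qed.

Section Averaging.
Variables (I : finType) (pi : I -> I).
Hypothesis piK : involutive pi.
Variable a : I -> R.

Let b := pair_average pi a.

Let B i j := (`|a i - a j| + `|a i - a (pi j)| + `|a (pi i) - a j|
              + `|a (pi i) - a (pi j)|) / 4.

Let sum_pi (F : I -> R) : \sum_j F (pi j) = \sum_j F j.
Proof. by rewrite [RHS](reindex_inj (inv_inj piK)). Qed.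

Let sum_distE : sum_dist a = \sum_i \sum_j B i j.
Proof.
have rowE i : \sum_j B i j =
    (\sum_j `|a i - a j|) / 2 + (\sum_j `|a (pi i) - a j|) / 2.
  rewrite -mulr_suml !big_split /= (sum_pi (fun j => `|a i - a j|)).
  rewrite (sum_pi (fun j => `|a (pi i) - a j|)); lra.
rewrite (eq_bigr _ (fun i _ => rowE i)) big_split /=.
rewrite (sum_pi (fun i => (\sum_j `|a i - a j|) / 2)) -big_split /=.
by apply: eq_bigr => i _; lra.
Qed.

Let dist_average_le i j : `|b i - b j| <= B i j.
Proof.
rewrite /b /B /pair_average distr_half.
have := ler_norm2DB (a i) (a (pi i)) (a j) (a (pi j)); lra.
Qed.

Let B_partner i : B i (pi i) = `|a i - a (pi i)| / 2.
Proof. by rewrite /B piK !subrr !normr0 [`|a (pi i) - a i|]distrC; lra. Qed.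

Lemma sum_dist_pair_average :
  sum_dist b <= sum_dist a - \sum_i `|a i - a (pi i)| / 2.
Proof.
rewrite sum_distE -sumrB; apply: ler_sum => i _.
rewrite (bigD1 (pi i)) // [X in _ <= X - _](bigD1 (pi i)) //= -B_partner.
have -> : b (pi i) = b i by rewrite /b /pair_average piK addrC.
rewrite subrr normr0 add0r.
have : \sum_(j | j != pi i) `|b i - b j| <= \sum_(j | j != pi i) B i j.
  by apply: ler_sum => j _; apply: dist_average_le.
lra.
Qed.

End Averaging.

Lemma tdisc_le (V : finType) (w : V -> R) (c : R) :
  0 <= c -> (forall u v, w v - w u <= c) -> tdisc w <= c.
Proof.
move=> c0 wc; rewrite /tdisc.
apply: (big_ind (fun x => x <= c)) => // [x y xc yc|u _].
  by rewrite ge_max xc yc.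
apply: (big_ind (fun x => x <= c)) => // [x y xc yc|v _].
  by rewrite ge_max xc yc.
by rewrite ler_norml lerNl opprB !wc.
Qed.

End Dispersion.

Section HubChains.
Variables (R : realType) (V : finType) (e : rel V) (w D : V -> R).
Hypothesis D_ge0 : forall h, 0 <= D h.
Hypothesis edge_hub : forall x y, e x y ->
  exists h, `|w x - w h| <= D h /\ `|w y - w x| <= D h.

(* Hubs in S are already paid for: from such a hub every step stays below U. *)
Lemma path_le_hubs p x (S : {set V}) U :
  path e x p -> w x <= U -> (forall h, h \in S -> w h + 2 * D h <= U) ->
  w (last x p) <= U + 3 * \sum_(h | h \notin S) D h.
Proof.
elim: p x S U => [|y p IH] x S U /=.
  move=> _ xU _; have : 0 <= \sum_(h | h \notin S) D h by apply: sumr_ge0.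
  lra.
case/andP=> exy pth xU SU.
have [h []] := edge_hub exy; rewrite !ler_norml => /andP[hx xh] /andP[_ yx].
have Dh := D_ge0 h.
have [hS|hS] := boolP (h \in S); first by apply: IH => //; have := SU _ hS; lra.
rewrite (bigD1 h) //= (eq_bigl (fun k => k \notin h |: S)); last first.
  by move=> k; rewrite in_setU1 negb_or andbC.
have := IH y (h |: S) (U + 3 * D h) pth; rewrite mulrDr addrA; apply; first lra.
by move=> k /setU1P[->|kS]; [lra | have := SU _ kS; lra].
Qed.

Lemma connect_le_hubs x y : connect e x y -> w y <= w x + 3 * \sum_h D h.
Proof.
case/connectP=> p pth ->.
have := path_le_hubs (S := set0) pth (lexx _).
rewrite (eq_bigl predT) => [|h]; last by rewrite in_set0.
by apply=> h; rewrite in_set0.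
Qed.

End HubChains.

Section Round.
Variables (R : realType) (V : finType) (w0 : V -> R) (prop acc : V -> option V).

(* Virtual nodes: (true, v) is the sender v_s, (false, v) the receiver v_a. *)
Definition partner (i : bool * V) : bool * V :=
  match i with
  | (true, v) => if prop v is Some h then
                   if acc h == Some v then (false, h) else (true, v)
                 else (true, v)
  | (false, v) => if acc v is Some u then (true, u) else (false, v)
  end.

Definition accepted_gap (h : V) : R :=
  if acc h is Some u then `|w0 u - w0 h| else 0.

Let half_load (i : bool * V) : R := w0 i.2 / 2.

Lemma accepted_gap_ge0 h : 0 <= accepted_gap h.
Proof. by rewrite /accepted_gap; case: (acc h). Qed.

Lemma sum_accepted_gap_ge0 : 0 <= \sum_h accepted_gap h.
Proof. by apply: sumr_ge0 => h _; exact: accepted_gap_ge0. Qed.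

Hypothesis acc_ok : acceptances_ok w0 prop acc.

Lemma partnerK : involutive partner.
Proof.
case=> -[] v /=.
  case pv: (prop v) => [h|] /=; last by rewrite pv.
  case: eqP => [ah | /eqP/negbTE nah] /=; first by rewrite ah.
  by rewrite pv nah.
have := acc_ok v; case av: (acc v) => [u|] /=; last by rewrite av.
by case=> pu _; rewrite /= pu av eqxx.
Qed.

Lemma round_step_pair_average v :
  round_step w0 prop acc v = pair_average partner half_load (true, v)
                             + pair_average partner half_load (false, v).
Proof.
rewrite /round_step /sender_load /receiver_load /pair_average /half_load /=.
by case: (prop v) => [h|]; [case: (acc h == Some v) |]; case: (acc v) => [u|] /=; lra.
Qed.

Lemma sum_accepted_gap_le :
  \sum_h accepted_gap h / 2 <= \sum_i `|half_load i - half_load (partner i)|.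
Proof.
rewrite sum_pair_bool; apply: ler_sum => v _.
have : 0 <= `|half_load (true, v) - half_load (partner (true, v))| by [].
rewrite /accepted_gap /half_load /=; case: (acc v) => [u|] /=.
  by rewrite !distr_half [`|w0 v - w0 u|]distrC; lra.
by rewrite subrr normr0; lra.
Qed.

Lemma phi_round_step :
  phi (round_step w0 prop acc) <= phi w0 - (\sum_h accepted_gap h) / 16.
Proof.
have merge := phi_merge_le round_step_pair_average.
have avg := sum_dist_pair_average partnerK half_load.
have init := sum_dist_halves w0.
have gap := sum_accepted_gap_le; rewrite -mulr_suml in gap.
rewrite -mulr_suml in avg.
lra.
Qed.

Lemma accepted_gap_hub (e : rel V) : proposals_ok e w0 prop ->
  forall x y, e x y ->
  exists h, `|w0 x - w0 h| <= accepted_gap h /\ `|w0 y - w0 x| <= accepted_gap h.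
Proof.
move=> prop_ok x y exy; have := prop_ok x.
case px: (prop x) => [h|]; last by move/(_ y); rewrite exy.
case=> _ best_prop; exists h; have := acc_ok h; rewrite /accepted_gap.
case: (acc h) => [u|]; last by move/(_ x); rewrite px.
case=> _ /(_ x px) best_acc; split=> //.
by apply: le_trans best_acc; rewrite [leRHS]distrC; exact: best_prop.
Qed.

Lemma tdisc_le_accepted_gap (e : rel V) :
  connected_graph e -> proposals_ok e w0 prop ->
  tdisc w0 <= 3 * \sum_h accepted_gap h.
Proof.
case=> _ [_ e_conn] prop_ok; apply: tdisc_le => [|u v].
  by rewrite mulr_ge0 ?sum_accepted_gap_ge0.
rewrite lerBlDl; apply: connect_le_hubs (e_conn u v).
  exact: accepted_gap_ge0.
exact: accepted_gap_hub.
Qed.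

Lemma phi_round_step_tdisc (e : rel V) :
  connected_graph e -> proposals_ok e w0 prop ->
  phi (round_step w0 prop acc) <= phi w0 - tdisc w0 / 60.
Proof.
move=> e_conn prop_ok.
have drop := phi_round_step.
have t_le := tdisc_le_accepted_gap e_conn prop_ok.
have := sum_accepted_gap_ge0; lra.
Qed.

End Round.

Theorem corollary1 (R : realType) (V : finType)
    (E : nat -> rel V) (w : nat -> V -> R)
    (prop acc : nat -> V -> option V) :
  (forall r, (1 <= r)%N -> connected_graph (E r)) ->
  (forall v, 0 <= w 0%N v) ->
  (forall r, (1 <= r)%N ->
     proposals_ok (E r) (w r.-1) (prop r) /\
     acceptances_ok (w r.-1) (prop r) (acc r) /\
     w r = round_step (w r.-1) (prop r) (acc r)) ->
  forall r, (1 <= r)%N ->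
    phi (w r) <= phi (w r.-1) - tdisc (w r.-1) / 60.
Proof.
move=> conn _ step r r_ge1.
have [prop_ok [acc_ok ->]] := step r r_ge1.
exact: (phi_round_step_tdisc acc_ok (conn r r_ge1) prop_ok).
Qed.
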